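(* Let $1\le n\le d$ and let $P_1,\dots,P_n$ be real quadratic forms on $\mathbb{R}^d$ such that for every choice of linearly independent $\vec w_1,\dots,\vec w_{d-n}\in\mathbb{R}^d$, $\det[\nabla P_1(t);\dots;\nabla P_n(t);\vec w_1;\dots;\vec w_{d-n}]\not\equiv0$ as a polynomial in $t$. Let $V\subset\mathbb{R}^{d+n}$ be a linear subspace and let integers $H_1,H_2$ satisfy $0\le H_1\le\min(\dim(V\cap S_1),d-n)$ and $0\le H_2\le\dim(V/S_1)$. Then $\dim(\pi_t(V))\ge H_1+H_2$ for all $t\in\mathbb{R}^d$ outside the zero set of some nontrivial polynomial of degree at most $H_2$.
   Context: $S_1=\mathbb{R}^d\times\{0\}\subset\mathbb{R}^{d+n}$, and $\dim(V/S_1)=\dim V-\dim(V\cap S_1)$. For $t\in\mathbb{R}^d$, $V(t)\subset\mathbb{R}^{d+n}$ is the linear subspace spanned by $(e_j,\partial_jP_1(t),\dots,\partial_jP_n(t))$, $j=1,\dots,d$ (tangent space of the graph of $(P_1,\dots,P_n)$), and $\pi_t$ is the orthogonal projection onto $V(t)$. *)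

From HB Require Import structures.
From mathcomp Require Import all_boot all_order all_algebra.
Set Implicit Arguments. Unset Strict Implicit. Unset Printing Implicit Defensive.
Import Order.TTheory GRing.Theory Num.Theory.
Local Open Scope ring_scope.

Section Defs.
Variable R : rcfType.

Definition qform d (A : 'M[R]_d) (t : 'rV[R]_d) : R := (t *m A *m t^T) 0 0.

(* Its gradient (partial derivatives written out):
   d/dt_j (sum_{k,l} A_kl t_k t_l) = sum_l A_jl t_l + sum_k A_kj t_k. *)
Definition qgrad d (A : 'M[R]_d) (t : 'rV[R]_d) : 'rV[R]_d := t *m (A^T + A).

Definition gradmx d n (A : 'I_n -> 'M[R]_d) (t : 'rV[R]_d) : 'M[R]_(n, d) :=
  \matrix_(i < n, j < d) qgrad (A i) t 0 j.

Definition grad_det d n (hnd : (n <= d)%N) (A : 'I_n -> 'M[R]_d)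
    (W : 'M[R]_(d - n, d)) (t : 'rV[R]_d) : R :=
  \det (castmx (subnKC hnd, erefl d) (col_mx (gradmx A t) W)).

(* S_1 = R^d x {0} in R^(d+n), as the row space of a square matrix. *)
Definition S1mx d n : 'M[R]_(d + n) := pid_mx d.

Definition Vt d n (A : 'I_n -> 'M[R]_d) (t : 'rV[R]_d) : 'M[R]_(d, d + n) :=
  row_mx 1%:M (gradmx A t)^T.

(* P is (the matrix, acting on row vectors x |-> x *m P, of) the orthogonal
   projection onto the row space of M, for the standard inner product. *)
Definition is_orth_proj m k (M : 'M[R]_(k, m)) (P : 'M[R]_m) : Prop :=
  forall x : 'rV[R]_m, (x *m P <= M)%MS /\ (x - x *m P) *m M^T = 0.

(* Real polynomials in d variables of degree at most k, given by their
   coefficients c alpha on exponent vectors alpha (only those with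
   |alpha| <= k are used). *)
Definition expdeg d k (a : {ffun 'I_d -> 'I_k.+1}) : nat := (\sum_i (a i : nat))%N.

Definition mpoly_nontrivial d k (c : {ffun 'I_d -> 'I_k.+1} -> R) : Prop :=
  exists a, (expdeg a <= k)%N /\ c a != 0.

Definition mpoly_eval d k (c : {ffun 'I_d -> 'I_k.+1} -> R) (t : 'rV[R]_d) : R :=
  \sum_(a | (expdeg a <= k)%N) c a * \prod_(i < d) t 0 i ^+ a i.

End Defs.

From HB Require Import structures.
From mathcomp Require Import all_boot all_order all_algebra.
From mathcomp Require Import perm.
Set Implicit Arguments.
Unset Strict Implicit.
Unset Printing Implicit Defensive.

Import Order.TTheory GRing.Theory Num.Theory.
Local Open Scope ring_scope.

(* Take rows (u_i, 0) of V inside S_1 with u_1, ..., u_H1 independent, and rows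
   (y_j, z_j) of V with z_1, ..., z_H2 independent.  Pairing them with the
   spanning rows (e_k, grad P(t)_k) of V(t) gives the matrix
   N(t) = [U; Y + Z grad P(t)]; whenever N(t) has full row rank, so do the
   projections of these rows onto V(t), whence dim pi_t(V) >= H1 + H2.
   A maximal minor of N(t) is a polynomial of degree <= H2, because only the
   lower H2 rows depend on t, affinely.  It is not identically zero: the
   hypothesis applied to a completion W of U gives t0 with [grad P(t0); W]
   invertible, so [U; Z grad P(t0)] has full row rank, and along the ray
   t = s t0 the matrix N(t) has full row rank for all but finitely many s. *)

Section PolynomialFunctions.
Variables (R : rcfType) (d K : nat).
Local Notation expvec := {ffun 'I_d -> 'I_K.+1}.

(* Exponents range over 'I_K.+1, so only degrees up to K are representable:
   hence the side condition k + l <= K on products. *)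
Definition polyfun k (f : 'rV[R]_d -> R) :=
  exists c : expvec -> R,
    (forall a, (k < expdeg a)%N -> c a = 0) /\ f =1 mpoly_eval c.

Definition monom (a : expvec) (t : 'rV[R]_d) : R := \prod_(i < d) t 0 i ^+ a i.

Lemma polyfun_eq k f g : f =1 g -> polyfun k g -> polyfun k f.
Proof. by move=> fg [c [c0 gc]]; exists c; split=> // t; rewrite fg. Qed.

Lemma polyfun_monom k a x : (expdeg a <= k)%N -> (expdeg a <= K)%N ->
  polyfun k (fun t => x * monom a t).
Proof.
move=> ak aK; exists (fun b => if b == a then x else 0); split.
  by move=> b; case: eqP => // ->; rewrite ltnNge ak.
move=> t; rewrite /mpoly_eval (bigD1 a) //= eqxx [X in _ + X]big1 ?addr0 //.
by move=> b /andP[_ /negbTE ->]; rewrite mul0r.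
Qed.

Lemma polyfun_cst k x : polyfun k (fun _ => x).
Proof.
pose a0 : expvec := [ffun => ord0].
have deg_a0 : expdeg a0 = 0%N by rewrite /expdeg big1 // => i _; rewrite ffunE.
apply: (polyfun_eq _ (polyfun_monom (a := a0) x _ _)); rewrite ?deg_a0 // => t.
by rewrite /monom big1 ?mulr1 // => i _; rewrite ffunE expr0.
Qed.

Lemma polyfun_coord i : (0 < K)%N -> polyfun 1 (fun t => t 0 i).
Proof.
move=> K_gt0; pose ai : expvec := [ffun j => if j == i then inord 1 else ord0].
have ai_i : (ai i : nat) = 1%N by rewrite ffunE eqxx inordK.
have ai_j j : j != i -> (ai j : nat) = 0%N by move/negbTE; rewrite ffunE => ->.
have deg_ai : expdeg ai = 1%N.
  by rewrite /expdeg (bigD1 i) //= big1 ?ai_i // => j /ai_j.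
apply: (polyfun_eq _ (polyfun_monom (a := ai) 1 _ _)); rewrite ?deg_ai // => t.
by rewrite mul1r /monom (bigD1 i) //= big1 ?mulr1 ?ai_i // => j /ai_j ->.
Qed.

Lemma polyfunD k f g : polyfun k f -> polyfun k g -> polyfun k (fun t => f t + g t).
Proof.
move=> [c [c0 fc]] [c' [c'0 gc']]; exists (fun a => c a + c' a); split.
  by move=> a la; rewrite c0 // c'0 // addr0.
by move=> t; rewrite fc gc' /mpoly_eval -big_split; apply: eq_bigr => a _; rewrite mulrDl.
Qed.

Lemma polyfunZ k x f : polyfun k f -> polyfun k (fun t => x * f t).
Proof.
move=> [c [c0 fc]]; exists (fun a => x * c a); split.
  by move=> a la; rewrite c0 // mulr0.
by move=> t; rewrite fc /mpoly_eval big_distrr; apply: eq_bigr => a _; apply: mulrA.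
Qed.

Lemma polyfun_sum k (I : Type) (r : seq I) (P : pred I) (F : I -> 'rV[R]_d -> R) :
  (forall i, polyfun k (F i)) -> polyfun k (fun t => \sum_(i <- r | P i) F i t).
Proof.
move=> hF; elim: r => [|x r IH].
  by apply: (polyfun_eq _ (polyfun_cst k 0)) => t; rewrite big_nil.
apply: (polyfun_eq (g := fun t => (if P x then F x t else 0) + \sum_(i <- r | P i) F i t)).
  by move=> t; rewrite big_cons; case: (P x); rewrite ?add0r.
by apply: polyfunD => //; case: (P x); [apply: hF | apply: polyfun_cst].
Qed.

Lemma expdeg_ge (a : expvec) i : (a i <= expdeg a)%N.
Proof. by rewrite /expdeg (bigD1 i) //= leq_addr. Qed.

Lemma polyfun_evalE k c t : (k <= K)%N -> (forall a, (k < expdeg a)%N -> c a = 0) ->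
  mpoly_eval c t = \sum_(a | (expdeg a <= k)%N) c a * monom a t.
Proof.
move=> kK c0; rewrite /mpoly_eval (bigID (fun a => expdeg a <= k)%N) /=.
rewrite [X in _ + X]big1 ?addr0; last first.
  by move=> a /andP[_]; rewrite -ltnNge => /c0 ->; rewrite mul0r.
apply: eq_bigl => a; apply/andP/idP => [[] //|ak]; split=> //.
exact: leq_trans ak kK.
Qed.

(* The coefficient of a monomial e in a product collects all pairs of exponent
   vectors summing to e; the sum never overflows thanks to k + l <= K. *)
Lemma polyfunM k l f g : (k + l <= K)%N -> polyfun k f -> polyfun l g ->
  polyfun (k + l) (fun t => f t * g t).
Proof.
move=> klK [c [c0 fc]] [c' [c'0 gc']].
pose Q (p : expvec * expvec) := (expdeg p.1 <= k)%N && (expdeg p.2 <= l)%N.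
pose add (p : expvec * expvec) : expvec := [ffun i => inord (p.1 i + p.2 i)].
have addE p : Q p -> forall i, (add p i : nat) = (p.1 i + p.2 i)%N.
  case/andP=> q1 q2 i; rewrite ffunE inordK // ltnS (leq_trans _ klK) // leq_add //.
    exact: leq_trans (expdeg_ge _ _) q1.
  exact: leq_trans (expdeg_ge _ _) q2.
have deg_add p : Q p -> expdeg (add p) = (expdeg p.1 + expdeg p.2)%N.
  by move=> qp; rewrite /expdeg -big_split; apply: eq_bigr => i _; rewrite addE.
have monom_add p t : Q p -> monom (add p) t = monom p.1 t * monom p.2 t.
  by move=> qp; rewrite /monom -big_split; apply: eq_bigr => i _; rewrite addE // exprD.
exists (fun e => \sum_(p | Q p && (add p == e)) c p.1 * c' p.2); split.
  move=> e; rewrite ltnNge => /negP le; rewrite big1 // => p /andP[qp /eqP ep].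
  by case: le; case/andP: (qp) => q1 q2; rewrite -ep deg_add // leq_add.
have kK : (k <= K)%N := leq_trans (leq_addr _ _) klK.
have lK : (l <= K)%N := leq_trans (leq_addl _ _) klK.
move=> t; rewrite fc gc' (polyfun_evalE _ kK c0) (polyfun_evalE _ lK c'0) big_distrl /=.
under eq_bigr => a _ do rewrite big_distrr /=.
rewrite pair_big_dep /= (partition_big add (fun e => (expdeg e <= K)%N)) /=; last first.
  by move=> p qp; rewrite deg_add // (leq_trans _ klK) // leq_add //; case/andP: qp.
apply: eq_bigr => e _; rewrite big_distrl /=.
apply: eq_bigr => p /andP[qp /eqP <-].
by rewrite -[X in _ = _ * X]/(monom (add p) t) monom_add // mulrACA.
Qed.

Lemma polyfun_prod m (F : 'I_m -> 'rV[R]_d -> R) : (m <= K)%N ->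
  (forall i, polyfun 1 (F i)) -> polyfun m (fun t => \prod_i F i t).
Proof.
elim: m F => [|m IH] F mK hF.
  by apply: (polyfun_eq _ (polyfun_cst 0 1)) => t; rewrite big_ord0.
apply: (polyfun_eq (g := fun t => (\prod_(i < m) F (widen_ord (leqnSn m) i) t) * F ord_max t)).
  by move=> t; rewrite big_ord_recr.
have IHm := IH (fun i => F (widen_ord (leqnSn m) i)) (ltnW mK) (fun i => hF _).
by have := polyfunM (k := m) (l := 1) _ IHm (hF ord_max); rewrite addn1 => /(_ mK).
Qed.

(* Leibniz expansion: each term is a constant times a product of m2 entries of L. *)
Lemma polyfun_det_col_mx m1 m2 (C : 'M[R]_(m1, m1 + m2))
    (L : 'rV[R]_d -> 'M[R]_(m2, m1 + m2)) :
  (m2 <= K)%N -> (forall i j, polyfun 1 (fun t => L t i j)) ->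
  polyfun m2 (fun t => \det (col_mx C (L t))).
Proof.
move=> m2K hL.
apply: (polyfun_eq (g := fun t => \sum_(s : 'S_(m1 + m2)) (-1) ^+ s *
   ((\prod_(i < m1) C i (s (lshift m2 i))) * \prod_(i < m2) L t i (s (rshift m1 i))))).
  move=> t; apply: eq_bigr => s _; rewrite big_split_ord /=.
  by congr (_ * (_ * _)); apply: eq_bigr => i _; rewrite ?col_mxEu ?col_mxEd.
by apply: polyfun_sum => s; do 2 apply: polyfunZ; apply: polyfun_prod.
Qed.

Definition polyfun_mx k m p (F : 'rV[R]_d -> 'M[R]_(m, p)) :=
  forall i j, polyfun k (fun t => F t i j).

Lemma polyfun_mx_cst k m p (M : 'M[R]_(m, p)) : polyfun_mx k (fun _ => M).
Proof. by move=> i j; apply: polyfun_cst. Qed.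

Lemma polyfun_mxD k m p (F G : 'rV[R]_d -> 'M[R]_(m, p)) :
  polyfun_mx k F -> polyfun_mx k G -> polyfun_mx k (fun t => F t + G t).
Proof.
move=> hF hG i j; apply: (polyfun_eq _ (polyfunD (hF i j) (hG i j))) => t.
by rewrite mxE.
Qed.

Lemma polyfun_mxMl k m p q (C : 'M[R]_(m, p)) (F : 'rV[R]_d -> 'M[R]_(p, q)) :
  polyfun_mx k F -> polyfun_mx k (fun t => C *m F t).
Proof.
move=> hF i j; apply: (polyfun_eq (g := fun t => \sum_r C i r * F t r j)).
  by move=> t; rewrite mxE.
by apply: polyfun_sum => r; apply: polyfunZ.
Qed.

Lemma polyfun_mxMr k m p q (F : 'rV[R]_d -> 'M[R]_(m, p)) (C : 'M[R]_(p, q)) :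
  polyfun_mx k F -> polyfun_mx k (fun t => F t *m C).
Proof.
move=> hF i j; apply: (polyfun_eq (g := fun t => \sum_r C r j * F t i r)).
  by move=> t; rewrite mxE; apply: eq_bigr => r _; rewrite mulrC.
by apply: polyfun_sum => r; apply: polyfunZ.
Qed.

End PolynomialFunctions.

Lemma mpoly_nontrivial_eval (R : rcfType) d k (c : {ffun 'I_d -> 'I_k.+1} -> R) t :
  mpoly_eval c t != 0 -> mpoly_nontrivial c.
Proof.
case: (pickP (fun a => (expdeg a <= k)%N && (c a != 0))) => [a /andP[] | c0].
  by exists a.
rewrite /mpoly_eval big1 ?eqxx // => a ak.
by move: (c0 a); rewrite ak => /negbFE/eqP ->; rewrite mul0r.
Qed.

Section RowFree.
Variable F : fieldType.

Lemma row_free_of_inj m p (M : 'M[F]_(m, p)) :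
  (forall v : 'rV_m, v *m M = 0 -> v = 0) -> row_free M.
Proof.
move=> h; rewrite -kermx_eq0; apply/eqP/row_matrixP => i; rewrite row0.
by apply: h; rewrite -row_mul mulmx_ker row0.
Qed.

Lemma row_free_mulmx_l m p q (M : 'M[F]_(m, p)) (N : 'M[F]_(p, q)) :
  row_free (M *m N) -> row_free M.
Proof. by move=> MN; rewrite /row_free eqn_leq rank_leq_row -{1}(eqP MN) mxrankM_maxl. Qed.

Lemma row_free_mulmx_r m p (M : 'M[F]_m) (N : 'M[F]_(m, p)) :
  row_free (M *m N) -> row_free N.
Proof. by move=> MN; rewrite /row_free eqn_leq rank_leq_row -{1}(eqP MN) mxrankM_maxr. Qed.

Lemma exists_row_free_submx h m p (M : 'M[F]_(m, p)) : (h <= \rank M)%N ->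
  exists X : 'M_(h, p), row_free X /\ (X <= M)%MS.
Proof.
move=> hM; exists (pid_mx h *m row_base M); split.
  by rewrite /row_free mxrankMfree ?row_base_free // rank_pid_mx.
by rewrite (submx_trans (submxMl _ _)) // eq_row_base.
Qed.

(* The first k rows of a basis adapted to U extend the rows of U. *)
Lemma exists_row_free_supmx m k p (U : 'M[F]_(m, p)) : row_free U ->
  (m <= k)%N -> (k <= p)%N -> exists W : 'M_(k, p), row_free W /\ (U <= W)%MS.
Proof.
move=> rU mk kp; exists (pid_mx k *m row_ebase U); split.
  by rewrite /row_free mxrankMfree ?rank_pid_mx // row_free_unit row_ebase_unit.
have UE : (U <= row_base U)%MS by rewrite eq_row_base.
apply: submx_trans UE _; rewrite /row_base.
have -> : (pid_mx (\rank U) : 'M[F]_(\rank U, p)) =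
    (pid_mx (\rank U) : 'M_(\rank U, k)) *m pid_mx k.
  by rewrite mul_pid_mx (eqP rU) (minn_idPl mk) (minn_idPr mk).
by rewrite -mulmxA submxMl.
Qed.

Lemma row_free_col_mx_mul a b m1 m2 p (G : 'M[F]_(a, p)) (W : 'M[F]_(b, p))
    (U : 'M[F]_(m1, p)) (Z : 'M[F]_(m2, a)) :
  row_free (col_mx G W) -> row_free U -> (U <= W)%MS -> row_free Z ->
  row_free (col_mx U (Z *m G)).
Proof.
move=> rGW rU /submxP[D UD] rZ; apply: row_free_of_inj => v.
rewrite -[v]hsubmxK mul_row_col UD => v0.
have : row_mx (rsubmx v *m Z) (lsubmx v *m D) *m col_mx G W = 0.
  by rewrite mul_row_col addrC -!mulmxA.
move/eqP; rewrite mulmx_free_eq0 // -row_mx0 => /eqP/eq_row_mx[vZ vD].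
have /eqP -> : lsubmx v == 0 by rewrite -(mulmx_free_eq0 _ rU) UD mulmxA vD mul0mx.
by move/eqP: vZ; rewrite mulmx_free_eq0 // => /eqP ->; rewrite row_mx0.
Qed.

Lemma submx_pid_rsubmx d n m (X : 'M[F]_(m, d + n)) :
  (X <= (pid_mx d : 'M_(d + n)))%MS = (rsubmx X == 0).
Proof.
apply/idP/eqP => [/submxP[D ->] | X0].
  by rewrite pid_mx_block block_mxEh mul_mx_row row_mxKr col_mx0 mulmx0.
have -> : X = X *m pid_mx d.
  rewrite -[X]hsubmxK X0 pid_mx_block mul_row_block.
  by rewrite !mulmx0 mulmx1 ?mul0mx !addr0.
exact: submxMl.
Qed.

Lemma rank_sub_cap_pid_mx d n m (V : 'M[F]_(m, d + n)) :
  (\rank V - \rank (V :&: (pid_mx d : 'M_(d + n))) <= \rank (rsubmx V))%N.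
Proof.
pose Q : 'M[F]_(d + n, n) := col_mx 0 1%:M.
have rsubQ k (X : 'M[F]_(k, d + n)) : X *m Q = rsubmx X.
  by rewrite -{1}[X]hsubmxK mul_row_col mulmx0 add0r mulmx1.
have kerQ : (kermx Q <= (pid_mx d : 'M_(d + n)))%MS.
  by rewrite submx_pid_rsubmx -rsubQ mulmx_ker.
rewrite -(mxrank_mul_ker V Q) rsubQ leq_subLR addnC leq_add2r.
exact/mxrankS/capmxS.
Qed.

Lemma exists_row_mx0_submx d n m h (V : 'M[F]_(m, d + n)) :
  (h <= \rank (V :&: (pid_mx d : 'M_(d + n))))%N ->
  exists U : 'M_(h, d), row_free U /\ (row_mx U 0 <= V)%MS.
Proof.
case/exists_row_free_submx=> X [rX XVS]; exists (lsubmx X).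
have X0 : rsubmx X = 0 by apply/eqP; rewrite -submx_pid_rsubmx (submx_trans XVS) ?capmxSr.
have XU : row_mx (lsubmx X) 0 = X by rewrite -X0 hsubmxK.
by rewrite /row_free -(rank_row_mx0 n) XU; split=> //; rewrite (submx_trans XVS) ?capmxSl.
Qed.

Lemma exists_row_mx_submx d n m h (V : 'M[F]_(m, d + n)) :
  (h <= \rank V - \rank (V :&: (pid_mx d : 'M_(d + n))))%N ->
  exists (Y : 'M_(h, d)) (Z : 'M_(h, n)), row_free Z /\ (row_mx Y Z <= V)%MS.
Proof.
move/leq_trans/(_ (rank_sub_cap_pid_mx V)).
case/exists_row_free_submx=> Z [rZ /submxP[D ZD]].
exists (lsubmx (D *m V)), Z; split=> //.
by rewrite ZD mulmx_rsub hsubmxK submxMl.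
Qed.
End RowFree.

Lemma exists_nonroot (R : numDomainType) (p : {poly R}) : p != 0 -> exists x, ~~ root p x.
Proof.
move=> p0; pose xs := [seq (i%:R : R) | i <- iota 0 (size p)].
have : ~~ all (root p) xs.
  apply/negP=> hall; have := max_poly_roots p0 hall.
  rewrite map_inj_uniq ?iota_uniq; last by move=> i j /eqP; rewrite eqr_nat => /eqP.
  by rewrite size_map size_iota ltnn => /(_ isT).
by case/allPn=> x _ hx; exists x.
Qed.

(* With K B = 1, (s K + Y) B = s + Y B, which is invertible unless -s is an
   eigenvalue of Y B. *)
Lemma exists_row_free_scale_add (F : numFieldType) m p (K Y : 'M[F]_(m, p)) :
  row_free K -> exists s, row_free (s *: K + Y).
Proof.
case/row_freeP=> B KB.
have [s hs] := exists_nonroot (monic_neq0 (char_poly_monic (- (Y *m B)))).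
exists s; apply: (@row_free_mulmx_l _ _ _ _ _ B); apply: row_free_of_inj => v.
rewrite mulmxDl -scalemxAl KB scalemx1 mulmxDr mul_mx_scalar => /eqP.
rewrite addr_eq0 => /eqP svY; apply/eqP; apply: contraNT hs => v0.
by rewrite -eigenvalue_root_char; apply/eigenvalueP; exists v; rewrite // mulmxN svY.
Qed.

Lemma orth_proj_rank_ge (R : rcfType) m k l h (M : 'M[R]_(k, m)) (P : 'M[R]_m)
    (V : 'M[R]_(l, m)) (X : 'M[R]_(h, m)) :
  is_orth_proj M P -> (X <= V)%MS -> row_free (X *m M^T) -> (h <= \rank (V *m P))%N.
Proof.
move=> hP XV rXM.
have rXP : row_free (X *m P).
  apply: row_free_of_inj => v vXP; apply/eqP; rewrite -(mulmx_free_eq0 _ rXM) mulmxA.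
  by have [_] := hP (v *m X); rewrite -(mulmxA v X P) vXP subr0 => ->.
by rewrite -(eqP rXP); apply/mxrankS/submxMr.
Qed.

Section TangentSpace.
Variables (R : rcfType) (d n : nat) (A : 'I_n -> 'M[R]_d).

Lemma gradmxZ s t : gradmx A (s *: t) = s *: gradmx A t.
Proof.
apply/matrixP => i j; rewrite !mxE big_distrr; apply: eq_bigr => k _.
by rewrite mxE; apply/esym/mulrA.
Qed.

Lemma polyfun_gradmx K : (0 < K)%N -> polyfun_mx K 1 (gradmx A).
Proof.
move=> K_gt0 i j; apply: (polyfun_eq (g := fun t => \sum_r ((A i)^T + A i) r j * t 0 r)).
  by move=> t; rewrite !mxE; apply: eq_bigr => r _; rewrite mulrC.
by apply: polyfun_sum => r; apply/polyfunZ/polyfun_coord.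
Qed.

Lemma mul_row_mx_trVt h (Y : 'M[R]_(h, d)) (Z : 'M[R]_(h, n)) t :
  row_mx Y Z *m (Vt A t)^T = Y + Z *m gradmx A t.
Proof. by rewrite tr_row_mx trmx1 trmxK mul_row_col mulmx1. Qed.

Definition tangent_pairing h1 h2 (U : 'M[R]_(h1, d)) (Y : 'M[R]_(h2, d))
    (Z : 'M[R]_(h2, n)) t : 'M[R]_(h1 + h2, d) :=
  col_mx U (Y + Z *m gradmx A t).

Lemma tangent_pairingE h1 h2 U Y Z t :
  col_mx (row_mx U 0) (row_mx Y Z) *m (Vt A t)^T = @tangent_pairing h1 h2 U Y Z t.
Proof. by rewrite mul_col_mx !mul_row_mx_trVt mul0mx addr0. Qed.

(* Only the last h2 rows depend on t, and they do so affinely. *)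
Lemma polyfun_det_tangent_pairing h1 h2 U Y Z (B : 'M[R]_(d, h1 + h2)) :
  polyfun h2 h2 (fun t => \det (@tangent_pairing h1 h2 U Y Z t *m B)).
Proof.
apply: (polyfun_eq (g := fun t => \det (col_mx (U *m B) ((Y + Z *m gradmx A t) *m B)))).
  by move=> t; rewrite /tangent_pairing mul_col_mx.
apply: polyfun_det_col_mx => // i j.
have h2_gt0 : (0 < h2)%N := leq_ltn_trans (leq0n _) (ltn_ord i).
apply: polyfun_mxMr; apply: polyfun_mxD; first exact: polyfun_mx_cst.
exact/polyfun_mxMl/polyfun_gradmx.
Qed.

Lemma row_free_grad_det (hnd : (n <= d)%N) (W : 'M[R]_(d - n, d)) t :
  grad_det hnd A W t != 0 -> row_free (col_mx (gradmx A t) W).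
Proof. by rewrite -unitfE -unitmxE -row_free_unit row_free_castmx. Qed.

(* diag(s, 1) N(s t0) = s [U; Z grad P(t0)] + [0; Y], and left multiplication
   cannot raise the rank, so no condition s != 0 is needed. *)
Lemma exists_row_free_tangent_pairing (hnd : (n <= d)%N) h1 h2
    (U : 'M[R]_(h1, d)) (Y : 'M[R]_(h2, d)) (Z : 'M[R]_(h2, n)) :
  (forall W : 'M[R]_(d - n, d), row_free W -> exists t, grad_det hnd A W t != 0) ->
  row_free U -> (h1 <= d - n)%N -> row_free Z ->
  exists t, row_free (tangent_pairing U Y Z t).
Proof.
move=> hdet rU h1dn rZ.
have [W [rW UW]] := exists_row_free_supmx rU h1dn (leq_subr n d).
have [t0 /row_free_grad_det rGW] := hdet W rW.
have rK := row_free_col_mx_mul rGW rU UW rZ.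
have [s rs] := exists_row_free_scale_add (col_mx 0 Y) rK.
exists (s *: t0); apply: (@row_free_mulmx_r _ _ _ (block_mx s%:M 0 0 1%:M)).
rewrite /tangent_pairing mul_block_col gradmxZ -scalemxAr !mul0mx addr0 add0r mul1mx.
by rewrite mul_scalar_mx addrC; move: rs; rewrite scale_col_mx add_col_mx addr0.
Qed.

End TangentSpace.

Theorem mainTheorem16 (R : rcfType) (d n : nat) (hn : (1 <= n)%N) (hnd : (n <= d)%N)
    (A : 'I_n -> 'M[R]_d)
    (hdet : forall W : 'M[R]_(d - n, d), row_free W ->
              exists t : 'rV[R]_d, grad_det hnd A W t != 0)
    (V : 'M[R]_(d + n)) (H1 H2 : nat)
    (hH1 : (H1 <= minn (\rank (V :&: S1mx R d n))%MS (d - n))%N)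
    (hH2 : (H2 <= \rank V - \rank (V :&: S1mx R d n)%MS)%N) :
  exists c : {ffun 'I_d -> 'I_H2.+1} -> R,
    mpoly_nontrivial c /\
    forall t : 'rV[R]_d, mpoly_eval c t != 0 ->
      forall P : 'M[R]_(d + n), is_orth_proj (Vt A t) P ->
        (H1 + H2 <= \rank (V *m P))%N.
Proof.
move: hH1; rewrite leq_min => /andP[/exists_row_mx0_submx[U [rU UV]] H1dn].
have [Y [Z [rZ YZV]]] := exists_row_mx_submx hH2.
have [t1 rN1] := exists_row_free_tangent_pairing Y hdet rU H1dn rZ.
have [B NB] := row_freeP rN1.
have [c [_ hc]] := polyfun_det_tangent_pairing A U Y Z B.
exists c; split.
  by apply: (@mpoly_nontrivial_eval _ _ _ _ t1); rewrite -hc NB det1 oner_neq0.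
move=> t; rewrite -hc -unitfE -unitmxE -row_free_unit => /row_free_mulmx_l rN P hP.
apply: (orth_proj_rank_ge hP (X := col_mx (row_mx U 0) (row_mx Y Z))).
  by rewrite col_mx_sub UV.
by rewrite tangent_pairingE.
Qed.
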